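(* For every $n\equiv 3\pmod 4$ with $n\ge 7$, there exists a Heffter array $H(n;3)$.
   Context: A Heffter array $H(n;k)$ is an $n\times n$ array in which some cells are filled with nonzero integers and the others are empty, such that: each row and each column contains exactly $k$ filled cells; the entries of every row and of every column sum to $0$ modulo $2nk+1$; and for each integer $1\le x\le nk$, exactly one of $x$ or $-x$ appears in the array, and it appears exactly once. *)

From HB Require Import structures.
From mathcomp Require Import all_boot all_order all_algebra.
Set Implicit Arguments. Unset Strict Implicit. Unset Printing Implicit Defensive.
Import Order.TTheory GRing.Theory Num.Theory.

(* A partially filled n x n array of integers: None = empty cell. *)
Definition parray (n : nat) := 'I_n -> 'I_n -> option int.

Definition entry (o : option int) : int := if o is Some x then x else 0%R.

Definition is_heffter (n k : nat) (A : parray n) : Prop :=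
  (forall i : 'I_n, #|[set j : 'I_n | A i j != None]| = k) /\
  (forall j : 'I_n, #|[set i : 'I_n | A i j != None]| = k) /\
  (forall (i j : 'I_n) (x : int), A i j = Some x ->
      (1 <= `|x|%N <= n * k)%N) /\
  (forall i : 'I_n,
      ((\sum_(j < n) entry (A i j)) %% (Posz (2 * n * k + 1)))%Z = 0%R) /\
  (forall j : 'I_n,
      ((\sum_(i < n) entry (A i j)) %% (Posz (2 * n * k + 1)))%Z = 0%R) /\
  (forall x : nat, (1 <= x <= n * k)%N ->
      #|[set p : 'I_n * 'I_n |
          (A p.1 p.2 == Some (Posz x)) || (A p.1 p.2 == Some (- Posz x)%R)]| = 1%N).
Arguments is_heffter : clear implicits.

From mathcomp Require Import all_boot all_order all_algebra zify.
Set Implicit Arguments. Unset Strict Implicit. Unset Printing Implicit Defensive.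
Import GRing.Theory.

(* The array is circulant: row i holds a_i, b_i, c_i in columns i, i+1, i+2
   (mod n), so the row sums are a_i + b_i + c_i and the column sums a_k + b_(k-1) + c_(k-2).
   With n = 4m+3, s = 2m+2 and a "spine" v, take a_i = s - v_(i-1), b_i = v_(i-1) + v_i and
   c_i = -s - v_i: every row and column sum telescopes to 0, except that b_0 is replaced by
   -2n, which turns the two sums through b_0 into -(6n+1).  The spine is
   v_j = (-1)^j (6m+5+z_j) for a graceful permutation z of {0,...,n-1}, i.e. one whose
   consecutive differences |z_j - z_(j-1)| are 1, ..., n-1 in some order.  Then the |b_i|
   are 1, ..., n-1 and 2n, while |a_(j+1)| and |c_j| are 4m+3+z_j and 8m+7+z_j in some
   order, so the absolute values fill {1, ..., 3n} exactly once. *)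

Lemma card_fiber_inj (T : finType) (f : T -> nat) (x : nat) :
  injective f -> (forall t, 0 < f t <= #|T|) -> 0 < x <= #|T| ->
  #|[set t | f t == x]| = 1.
Proof.
move=> f_inj f_range x_range.
have uniq_f : uniq [seq f t | t in T] by rewrite map_inj_uniq ?enum_uniq.
have f_sub : {subset [seq f t | t in T] <= iota 1 #|T|}.
  by move=> _ /imageP[t _ ->]; rewrite mem_iota; have := f_range t; lia.
have size_f : size (iota 1 #|T|) <= size [seq f t | t in T] by rewrite size_iota size_image.
have [_ f_onto] := uniq_min_size uniq_f f_sub size_f.
have /imageP[t _ ->] : x \in [seq f t | t in T] by rewrite f_onto mem_iota; lia.
rewrite (_ : [set u | f u == f t] = [set t]) ?cards1 //; apply/setP => u; rewrite !inE.
by apply/eqP/eqP => [/f_inj | ->].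
Qed.

Section Circulant.

Variables (N : nat) (cell : 'I_N -> 'I_3 -> int).
Hypothesis N_gt2 : 2 < N.

Lemma ord_gt0 (i : 'I_N) : 0 < N.
Proof. exact: leq_ltn_trans (leq0n i) (ltn_ord i). Qed.

Definition diag (i : 'I_N) (d : 'I_3) : 'I_N := Ordinal (ltn_pmod (i + d) (ord_gt0 i)).

Definition antidiag (k : 'I_N) (d : 'I_3) : 'I_N :=
  Ordinal (ltn_pmod (k + (N - d)) (ord_gt0 k)).

Definition circulant : parray N := fun i k => omap (cell i) [pick d | diag i d == k].

Lemma ord3_ltN (d : 'I_3) : d < N.
Proof. exact: leq_trans (ltn_ord d) N_gt2. Qed.

Lemma diag_inj i : injective (diag i).
Proof.
move=> d d' /(congr1 val) /eqP; rewrite /= eqn_modDl !modn_small ?ord3_ltN //.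
by move/eqP/val_inj.
Qed.

Lemma diag_antidiag i k d : (diag i d == k) = (i == antidiag k d).
Proof.
have d_leN : d <= N by rewrite ltnW ?ord3_ltN.
apply/eqP/eqP => [<- | ->]; apply: val_inj => /=.
  by rewrite modnDml -addnA subnKC // modnDr modn_small.
by rewrite modnDml -addnA subnK // modnDr modn_small.
Qed.

Lemma antidiagE k d : antidiag k d = (if d <= k then k - d else k + N - d) :> nat.
Proof.
have [d_lt k_lt] := (ord3_ltN d, ltn_ord k); rewrite /=; case: leqP => d_k.
  by rewrite (_ : k + (N - d) = k - d + N) 1?modnDr ?modn_small //; lia.
by rewrite modn_small; lia.
Qed.

Lemma antidiagK k d : diag (antidiag k d) d = k.
Proof. by apply/eqP; rewrite diag_antidiag. Qed.

Lemma antidiag_inj k : injective (antidiag k).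
Proof.
move=> d d' eq_dd'; have := antidiagK k d'.
by rewrite -eq_dd' -{2}(antidiagK k d) => /diag_inj.
Qed.

Lemma circulantP i k y :
  reflect (exists2 d, diag i d = k & cell i d = y) (circulant i k == Some y).
Proof.
rewrite /circulant; case: pickP => [d /eqP diag_d | no_d] /=.
  apply: (iffP eqP) => [[<-] | [e diag_e <-]]; first by exists d.
  by rewrite (@diag_inj i d e) // diag_d diag_e.
by apply: ReflectF => -[d /eqP diag_d _]; rewrite no_d in diag_d.
Qed.

Lemma circulant_filled i k : (circulant i k != None) = [exists d, diag i d == k].
Proof.
rewrite /circulant; case: pickP => [d diag_d | no_d] /=; apply/esym.
  by apply/existsP; exists d.
by apply/existsP => -[d]; rewrite no_d.
Qed.

Lemma entry_circulant i k : entry (circulant i k) = (\sum_(d | diag i d == k) cell i d)%R.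
Proof.
rewrite /circulant; case: pickP => [d /eqP diag_d | no_d] /=; last by rewrite big_pred0.
rewrite (big_pred1 d) // => e; apply/eqP/eqP => [diag_e | -> //].
by apply: (@diag_inj i); rewrite diag_e diag_d.
Qed.

Lemma card_row_circulant i : #|[set k | circulant i k != None]| = 3.
Proof.
rewrite (_ : [set k | _] = diag i @: setT) ?(card_imset _ (@diag_inj i)) ?cardsT ?card_ord //.
apply/setP => k; rewrite inE circulant_filled.
by apply/existsP/imsetP => -[d]; [move/eqP => <-; exists d | move=> _ ->; exists d].
Qed.

Lemma card_col_circulant k : #|[set i | circulant i k != None]| = 3.
Proof.
rewrite (_ : [set i | _] = antidiag k @: setT)
  ?(card_imset _ (@antidiag_inj k)) ?cardsT ?card_ord //.
apply/setP => i; rewrite inE circulant_filled.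
apply/existsP/imsetP => -[d].
  by rewrite diag_antidiag => /eqP ->; exists d.
by move=> _ ->; exists d; rewrite antidiagK.
Qed.

Lemma row_sum_circulant i : (\sum_(k < N) entry (circulant i k) = \sum_(d < 3) cell i d)%R.
Proof.
under eq_bigr do rewrite entry_circulant.
rewrite (exchange_big_dep xpredT) //=; apply: eq_bigr => d _.
by rewrite (big_pred1 (diag i d)) // => k; rewrite eq_sym.
Qed.

Lemma col_sum_circulant k :
  (\sum_(i < N) entry (circulant i k) = \sum_(d < 3) cell (antidiag k d) d)%R.
Proof.
under eq_bigr do rewrite entry_circulant.
rewrite (exchange_big_dep xpredT) //=; apply: eq_bigr => d _.
by rewrite (big_pred1 (antidiag k d)) // => i; rewrite diag_antidiag.
Qed.

Theorem circulant_is_heffter :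
  (forall i d, 0 < `|cell i d|%N <= N * 3) ->
  injective (fun p : 'I_N * 'I_3 => `|cell p.1 p.2|%N) ->
  (forall i, ((\sum_(d < 3) cell i d) %% (2 * N * 3 + 1)%N)%Z = 0%R) ->
  (forall k, ((\sum_(d < 3) cell (antidiag k d) d) %% (2 * N * 3 + 1)%N)%Z = 0%R) ->
  is_heffter N 3 circulant.
Proof.
move=> cell_range abs_cell_inj row_sum col_sum.
split; [exact: card_row_circulant | split; [exact: card_col_circulant | split]].
  by move=> i k y /eqP/circulantP[d _ <-]; apply: cell_range.
split; [by move=> i; rewrite row_sum_circulant | split; [by move=> k; rewrite col_sum_circulant|]].
move=> x x_range; set f := fun p : 'I_N * 'I_3 => `|cell p.1 p.2|%N.
have cell_at_inj : injective (fun q : 'I_N * 'I_3 => (q.1, diag q.1 q.2)).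
  by move=> [i d] [i' d'] /= /pair_equal_spec[<- eq_diag]; rewrite (diag_inj eq_diag).
rewrite (_ : [set p | _] = (fun q => (q.1, diag q.1 q.2)) @: [set q | f q == x]).
  have card_cells : #|{: 'I_N * 'I_3}| = N * 3 by rewrite card_prod !card_ord.
  rewrite card_imset // card_fiber_inj // card_cells // => -[i d].
  exact: cell_range.
apply/setP => -[i k]; rewrite inE /=; apply/idP/imsetP.
  by case/orP => /circulantP[d <- cell_d]; exists (i, d); rewrite // inE /f /= cell_d; lia.
move=> [[i' d] /=]; rewrite inE /f /= => /eqP abs_cell [-> ->].
have /eqP -> : circulant i' (diag i' d) == Some (cell i' d).
  by apply/circulantP; exists d.
rewrite !(inj_eq (@Some_inj _)); lia.
Qed.

End Circulant.

Section Construction.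

Variable m : nat.
Local Notation N := (4 * m + 3).

Definition zigzag j :=
  if j <= 2 * m then (if odd j then 3 * m + 1 - j %/ 2 else m + 1 + j %/ 2)
  else if odd (j - (2 * m + 1)) then 4 * m + 2 - (j - (2 * m + 1)) %/ 2
  else (j - (2 * m + 1)) %/ 2.

Definition zigzag_gap j :=
  if j <= 2 * m then 2 * m + 1 - j else if j == 2 * m + 1 then 2 * m + 1 else 6 * m + 4 - j.

Lemma zigzag_lt j : j < N -> zigzag j < N.
Proof. rewrite /zigzag; repeat case: ifP; lia. Qed.

Lemma zigzag_inj j j' : j < N -> j' < N -> zigzag j = zigzag j' -> j = j'.
Proof. rewrite /zigzag; repeat case: ifP; lia. Qed.

Lemma zigzag_gapE j :
  0 < j < N -> `|(Posz (zigzag j) - Posz (zigzag j.-1))%R|%N = zigzag_gap j.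
Proof. rewrite /zigzag /zigzag_gap; repeat case: ifP; lia. Qed.

Lemma zigzag_gap_inj j j' :
  0 < j < N -> 0 < j' < N -> zigzag_gap j = zigzag_gap j' -> j = j'.
Proof. rewrite /zigzag_gap; repeat case: ifP; lia. Qed.

Lemma zigzag_gap_range j : 0 < j < N -> 0 < zigzag_gap j < N.
Proof. rewrite /zigzag_gap; repeat case: ifP; lia. Qed.

Definition prev j := if j is j'.+1 then j' else 4 * m + 2.

Lemma prevE j : prev j = if j == 0 then 4 * m + 2 else j.-1.
Proof. by case: j. Qed.

Lemma prev_lt j : j < N -> prev j < N.
Proof. by case: j => /= [|j]; lia. Qed.

Lemma prev_inj j j' : j < N -> j' < N -> prev j = prev j' -> j = j'.
Proof. by case: j; case: j' => /=; lia. Qed.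

Definition band j (large : bool) := (if large then 8 * m + 7 else 4 * m + 3) + zigzag j.

Lemma band_inj j j' b b' : j < N -> j' < N -> band j b = band j' b' -> j = j' /\ b = b'.
Proof.
move=> j_lt j'_lt; have := zigzag_inj j_lt j'_lt.
have := zigzag_lt j_lt; have := zigzag_lt j'_lt; rewrite /band; case: b; case: b'; lia.
Qed.

Lemma band_range j b : j < N -> N <= band j b <= 3 * N /\ band j b != 2 * N.
Proof. by move/zigzag_lt; rewrite /band; case: b; split; lia. Qed.

Definition spine_index (i d : nat) := if d == 0 then prev i else i.

Lemma spine_index_lt j d : j < N -> spine_index j d < N.
Proof. by rewrite /spine_index; case: ifP => // _; apply: prev_lt. Qed.

Local Open Scope ring_scope.

Definition spine j : int :=
  if odd j then - Posz (6 * m + 5 + zigzag j) else Posz (6 * m + 5 + zigzag j).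

Definition heff_a j : int := Posz (2 * m + 2) - spine (prev j).
Definition heff_b j : int := if j is 0 then - Posz (2 * N) else spine (prev j) + spine j.
Definition heff_c j : int := - Posz (2 * m + 2) - spine j.

Definition heff_cell (i : 'I_N) (d : 'I_3) : int := nth 0 [:: heff_a i; heff_b i; heff_c i] d.

Definition heff_label (i : 'I_N) (d : 'I_3) : nat :=
  if d == 1%N :> nat then (if i == 0%N :> nat then (2 * N)%N else zigzag_gap i)
  else band (spine_index i d) (odd (spine_index i d) == (d == 0%N :> nat)).

Lemma abs_heff_cell i d : `|heff_cell i d|%N = heff_label i d.
Proof.
have i_lt := ltn_ord i.
case: d => -[|[|[|//]]] d_lt; rewrite /heff_cell /heff_label /spine_index /=.
- by rewrite /heff_a /band /spine; case: (odd (prev i)) => /=; lia.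
- rewrite /heff_b; case: (nat_of_ord i) i_lt => [|j] j_lt /=; first lia.
  by have := @zigzag_gapE j.+1; rewrite /spine /=; case: (odd j) => /=; lia.
- by rewrite /heff_c /band /spine; case: (odd i) => /=; lia.
Qed.

Lemma heff_label_inj : injective (fun p : 'I_N * 'I_3 => heff_label p.1 p.2).
Proof.
move=> [i d] [i' d'] /= eq_label.
suff [/val_inj -> /val_inj ->] : (i : nat) = i' /\ (d : nat) = d' by [].
have [i_lt i'_lt] := (ltn_ord i, ltn_ord i').
have [d_lt d'_lt] := (ltn_ord d, ltn_ord d').
have [idx_lt idx'_lt] := (spine_index_lt d i_lt, spine_index_lt d' i'_lt).
move: eq_label; rewrite /heff_label.
case: (d =P 1%N :> nat) => d1; case: (d' =P 1%N :> nat) => d'1.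
- have := @zigzag_gap_inj i i'; have := @zigzag_gap_range i; have := @zigzag_gap_range i'.
  by case: ifP; case: ifP; lia.
- have := band_range (odd (spine_index i' d') == (d' == 0%N :> nat)) idx'_lt.
  by have := @zigzag_gap_range i; case: ifP; lia.
- have := band_range (odd (spine_index i d) == (d == 0%N :> nat)) idx_lt.
  by have := @zigzag_gap_range i'; case: ifP; lia.
move=> /(band_inj idx_lt idx'_lt) [eq_idx eq_large].
have eq_d : (d : nat) = d' by move: eq_large; rewrite eq_idx; case: odd; lia.
split => //; move: eq_idx; rewrite /spine_index -eq_d.
by case: ifP => // _; apply: prev_inj.
Qed.

Lemma heff_label_range i d : (0 < heff_label i d <= N * 3)%N.
Proof.
have [i_lt idx_lt] := (ltn_ord i, spine_index_lt d (ltn_ord i)).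
rewrite /heff_label; case: ifP => _.
  by case: ifP => [|/negbT i_gt0]; [lia | have := @zigzag_gap_range i; lia].
by have := band_range (odd (spine_index i d) == (d == 0%N :> nat)) idx_lt; lia.
Qed.

Lemma spine_first : spine 0%N = Posz (7 * m + 6).
Proof. rewrite /spine /zigzag /=; lia. Qed.

Lemma spine_last : spine (4 * m + 2) = Posz (9 * m + 7).
Proof.
have odd_last : odd (4 * m + 2) = false by lia.
have odd_mid : odd (4 * m + 2 - (2 * m + 1)) by lia.
by rewrite /spine /zigzag odd_last odd_mid ifF /=; lia.
Qed.

Lemma heff_row_sum j :
  heff_a j + heff_b j + heff_c j = (if j == 0%N then -1 else 0) * Posz (2 * N * 3 + 1).
Proof.
case: j => [|j]; rewrite /heff_a /heff_b /heff_c /=; last lia.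
by rewrite spine_first spine_last; lia.
Qed.

Lemma heff_col_sum k : (k < N)%N ->
  heff_a k + heff_b (prev k) + heff_c (prev (prev k)) =
  (if k == 1%N then -1 else 0) * Posz (2 * N * 3 + 1).
Proof.
case: k => [|[|k]] k_lt; rewrite /heff_a /heff_b /heff_c /=; last lia.
  by rewrite [(4 * m + 2)%N]addn2 /=; lia.
by rewrite spine_first spine_last; lia.
Qed.

Lemma antidiag_prev (k : 'I_N) (d : 'I_3) : antidiag k d = iter d prev k :> nat.
Proof.
have k_lt := ltn_ord k; rewrite antidiagE; last lia.
by case: d => -[|[|[|//]]] _ /=; rewrite ?subn0 // !prevE; repeat case: ifP; lia.
Qed.

Lemma heffter_circulant : is_heffter N 3 (circulant heff_cell).
Proof.
have N_gt2 : (2 < N)%N by lia.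
apply: circulant_is_heffter => // [i d | [i d] [i' d'] /= eq_abs | i | k].
- by rewrite abs_heff_cell heff_label_range.
- by apply: heff_label_inj; rewrite /= -!abs_heff_cell.
- by rewrite !big_ord_recl big_ord0 addr0 /= addrA heff_row_sum modzMl.
rewrite !big_ord_recl big_ord0 addr0 /heff_cell !antidiag_prev /= addrA.
by rewrite heff_col_sum ?modzMl.
Qed.

End Construction.

Theorem lemma4p1 (n : nat) :
  n %% 4 = 3 -> 7 <= n -> exists A : parray n, is_heffter n 3 A.
Proof.
move=> n_mod4 _; have -> : n = 4 * (n %/ 4) + 3 by lia.
by exists (circulant (@heff_cell (n %/ 4))); apply: heffter_circulant.
Qed.
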